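(* Let $L$ be an invariant intrinsic location functional and $\mathbf X$ a periodic stationary process with period $1$. Then $L(\mathbf X,[0,1])$ is uniformly distributed on $[0,1]$; in particular its density on $(0,1)$ equals $1$.
   Context: Let $H$ be a set of functions $\mathbb R\to\mathbb R$ with period $1$, invariant under shifts ($\theta_cg(x)=g(x+c)$), with the cylindrical $\sigma$-field; $\mathcal I$ is the set of compact intervals $[a,b]$, $a<b$. An intrinsic location functional is a map $L:H\times\mathcal I\to\mathbb R\cup\{\infty\}$ such that: (i) $L(\cdot,I)$ is measurable; (ii) $L(g,I)\in I\cup\{\infty\}$; (iii) $L(g,I)=L(\theta_cg,I-c)+c$ (with $\infty+c=\infty$); (iv) if $I_2\subseteq I_1$ and $L(g,I_1)\in I_2$ then $L(g,I_2)=L(g,I_1)$; (v) if $I_2\subseteq I_1$ and $L(g,I_2)\ne\infty$ then $L(g,I_1)\neq\infty$. It is called invariant if moreover $L(g,I)\ne\infty$ for all $g\in H$, $I\in\mathcal I$, and $L(g,[0,1])=L(g,[a,a+1])\pmod 1$ for all $a\in\mathbb R$, $g\in H$. A periodic stationary process with period $1$ is a stationary process with continuous sample paths of period $1$ lying in $H$. *)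

From Stdlib Require Import Reals Lra.
Open Scope R_scope.

Definition sigma_algebra {T : Type} (S : (T -> Prop) -> Prop) : Prop :=
  S (fun _ => True) /\
  (forall A, S A -> S (fun x => ~ A x)) /\
  (forall A : nat -> T -> Prop, (forall n, S (A n)) -> S (fun x => exists n, A n x)).

Definition generated {T : Type} (G : (T -> Prop) -> Prop) : (T -> Prop) -> Prop :=
  fun A => forall S, sigma_algebra S -> (forall B, G B -> S B) -> S A.

Definition borel : (R -> Prop) -> Prop :=
  generated (fun B => exists a b : R, forall x, B x <-> (a < x <= b)).

Definition cylindrical : ((R -> R) -> Prop) -> Prop :=
  generated (fun A => exists (t : R) (B : R -> Prop),
                borel B /\ forall g, A g <-> B (g t)).

Definition trace_meas (H : (R -> R) -> Prop) (E : (R -> R) -> Prop) : Prop :=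
  exists A, cylindrical A /\ forall g, H g -> (E g <-> A g).

Definition probability {Om : Type} (F : (Om -> Prop) -> Prop) (P : (Om -> Prop) -> R) : Prop :=
  P (fun _ => True) = 1 /\
  (forall A, F A -> 0 <= P A) /\
  (forall A : nat -> Om -> Prop,
      (forall n, F (A n)) ->
      (forall n m x, n <> m -> A n x -> A m x -> False) ->
      infinite_sum (fun n => P (A n)) (P (fun x => exists n, A n x))).

Definition shift (c : R) (g : R -> R) : R -> R := fun x => g (x + c).

Definition periodic1 (g : R -> R) : Prop := forall x, g (x + 1) = g x.

Definition periodic_shift_space (H : (R -> R) -> Prop) : Prop :=
  (forall g, H g -> periodic1 g) /\ (forall g c, H g -> H (shift c g)).

(** * Intrinsic location functionals.
    A compact interval [a,b] (a<b) is given by its endpoints; the value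
    [None] encodes infinity. *)

Definition intrinsic_location (H : (R -> R) -> Prop)
    (L : (R -> R) -> R -> R -> option R) : Prop :=
  (forall a b, a < b ->
     (forall B, borel B -> trace_meas H (fun g => exists y, L g a b = Some y /\ B y)) /\
     trace_meas H (fun g => L g a b = None)) /\
  (forall g a b y, H g -> a < b -> L g a b = Some y -> a <= y <= b) /\
  (forall g a b c, H g -> a < b ->
     L g a b = option_map (fun y => y + c) (L (shift c g) (a - c) (b - c))) /\
  (forall g a1 b1 a2 b2 y, H g -> a1 < b1 -> a2 < b2 -> a1 <= a2 -> b2 <= b1 ->
     L g a1 b1 = Some y -> a2 <= y <= b2 -> L g a2 b2 = Some y) /\
  (forall g a1 b1 a2 b2, H g -> a1 < b1 -> a2 < b2 -> a1 <= a2 -> b2 <= b1 ->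
     L g a2 b2 <> None -> L g a1 b1 <> None).

Definition invariant_intrinsic_location (H : (R -> R) -> Prop)
    (L : (R -> R) -> R -> R -> option R) : Prop :=
  intrinsic_location H L /\
  (forall g a b, H g -> a < b -> L g a b <> None) /\
  (forall g a, H g -> exists (y0 ya : R) (k : Z),
      L g 0 1 = Some y0 /\ L g a (a + 1) = Some ya /\ y0 = ya + IZR k).

Definition periodic_stationary_process {Om : Type} (H : (R -> R) -> Prop)
    (F : (Om -> Prop) -> Prop) (P : (Om -> Prop) -> R) (X : Om -> R -> R) : Prop :=
  (forall w, H (X w)) /\
  (forall w, continuity (X w)) /\
  (forall w, periodic1 (X w)) /\
  (forall A, cylindrical A -> F (fun w => A (X w))) /\
  (forall c A, cylindrical A -> P (fun w => A (shift c (X w))) = P (fun w => A (X w))).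

From Pilot Require Import Defs.
From Stdlib Require Import Reals Znat Lra Lia Classical FunctionalExtensionality PropExtensionality.
Open Scope R_scope.

(* Let Y := L(X,[0,1]).  Shift compatibility and invariance give
   L(θ_c X,[0,1]) = Y - c (mod 1), and by stationarity this has the law of Y:
   read on the circle R/Z, the law of Y is rotation invariant.  Hence the n
   arcs of length 1/n all have probability 1/n, which pins the distribution
   function of Y at every grid point m/n, and by monotonicity everywhere. *)

Lemma pred_ext {T : Type} (A B : T -> Prop) : (forall x, A x <-> B x) -> A = B.
Proof.
  intro h. apply functional_extensionality; intro x.
  apply propositional_extensionality; auto.
Qed.

Section SigmaAlgebra.
Context {T : Type} (S : (T -> Prop) -> Prop).
Hypothesis hS : sigma_algebra S.

Lemma sigma_ext (A B : T -> Prop) : S A -> (forall x, A x <-> B x) -> S B.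
Proof. intros hA h. now rewrite <- (pred_ext A B h). Qed.

Lemma sigma_empty : S (fun _ => False).
Proof.
  destruct hS as [hT [hC _]].
  apply (sigma_ext (fun x => ~ True)); [now apply hC | tauto].
Qed.

Lemma sigma_union (A B : T -> Prop) : S A -> S B -> S (fun x => A x \/ B x).
Proof.
  destruct hS as [_ [_ hU]]. intros hA hB.
  set (f := fun n : nat => match n with 0%nat => A | _ => B end).
  apply (sigma_ext (fun x => exists n, f n x)).
  - apply hU. now intros [|n].
  - intro x; split.
    + now intros [[|n] h]; [left | right].
    + intros [h|h]; [exists 0%nat | exists 1%nat]; exact h.
Qed.

Lemma sigma_diff (A B : T -> Prop) : S A -> S B -> S (fun x => B x /\ ~ A x).
Proof.
  intros hA hB. destruct hS as [_ [hC _]].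
  apply (sigma_ext (fun x => ~ (~ B x \/ A x))).
  - apply hC, sigma_union; [apply hC|]; assumption.
  - intro x; split; [intro h; split; [apply NNPP|]|]; tauto.
Qed.

Lemma sigma_bounded_union (A : nat -> T -> Prop) (m : nat) :
  (forall k, S (A k)) -> S (fun x => exists k, (k < m)%nat /\ A k x).
Proof.
  intro hA. induction m as [|m IH].
  - apply (sigma_ext _ _ sigma_empty). intro x; split; [tauto|]. intros [k [hk _]]; lia.
  - apply (sigma_ext _ _ (sigma_union _ _ IH (hA m))). intro x; split.
    + intros [[k [hk h]]|h]; [exists k | exists m]; split; auto; lia.
    + intros [k [hk h]].
      destruct (Nat.eq_dec k m) as [->|ne]; [right | left; exists k; split]; auto; lia.
Qed.

End SigmaAlgebra.

Section Probability.
Context {Om : Type} (F : (Om -> Prop) -> Prop) (P : (Om -> Prop) -> R).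
Hypotheses (hF : sigma_algebra F) (hP : probability F P).

Lemma prob_ge0 (A : Om -> Prop) : F A -> 0 <= P A.
Proof. apply hP. Qed.

Lemma prob_empty : P (fun _ => False) = 0.
Proof.
  destruct hP as [_ [_ hadd]]. set (p := P (fun _ => False)).
  assert (hs : infinite_sum (fun _ : nat => p) p).
  { unfold p at 2. rewrite (pred_ext (fun _ => False) (fun _ => exists _ : nat, False)).
    - apply (hadd (fun _ _ => False)); [intro; now apply sigma_empty | auto].
    - intro w; split; [tauto | now intros [_ f]]. }
  (* The partial sums of the constant series are (n + 1) p, so convergence to p forces p = 0. *)
  destruct (Req_dec p 0) as [e|ne]; [exact e|exfalso].
  assert (hsum : forall n, sum_f_R0 (fun _ => p) n = (INR n + 1) * p).
  { induction n as [|n IH]; simpl; [ring|]. rewrite IH. destruct n; simpl; ring. }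
  destruct (hs (Rabs p)) as [N hN]; [now apply Rabs_pos_lt|].
  specialize (hN (S N) ltac:(lia)). unfold R_dist in hN. rewrite hsum, S_INR in hN.
  replace ((INR N + 1 + 1) * p - p) with ((INR N + 1) * p) in hN by ring.
  rewrite Rabs_mult, (Rabs_right (INR N + 1)) in hN by (pose proof (pos_INR N); lra).
  pose proof (pos_INR N). pose proof (Rabs_pos p). nra.
Qed.

Lemma prob_union_disjoint (A B : Om -> Prop) : F A -> F B ->
  (forall w, A w -> B w -> False) -> P (fun w => A w \/ B w) = P A + P B.
Proof.
  intros hA hB hd. pose proof prob_empty as he. destruct hP as [_ [_ hadd]].
  set (f := fun n : nat => match n with 0%nat => A | 1%nat => B | _ => fun _ => False end).
  assert (hs : infinite_sum (fun n => P (f n)) (P (fun w => exists n, f n w))).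
  { apply hadd.
    - intros [|[|n]]; simpl; auto. now apply sigma_empty.
    - intros [|[|n]] [|[|m]] w hnm; simpl; try tauto; eauto. }
  assert (hs2 : infinite_sum (fun n => P (f n)) (P A + P B)).
  { intros eps heps. exists 1%nat. intros n hn. unfold R_dist.
    replace (sum_f_R0 (fun n => P (f n)) n) with (P A + P B); [rewrite Rminus_diag, Rabs_R0; lra|].
    induction n as [|n IH]; [lia|]. destruct n as [|n]; [reflexivity|].
    simpl sum_f_R0 in *. rewrite <- IH by lia. simpl; rewrite he; ring. }
  rewrite <- (uniqueness_sum _ _ _ hs hs2). f_equal. apply pred_ext; intro w; split.
  - intros [h|h]; [exists 0%nat | exists 1%nat]; exact h.
  - intros [[|[|n]] h]; simpl in h; tauto.
Qed.

Lemma prob_le (A B : Om -> Prop) : F A -> F B -> (forall w, A w -> B w) -> P A <= P B.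
Proof.
  intros hA hB hsub.
  rewrite (pred_ext B (fun w => A w \/ (B w /\ ~ A w))).
  - rewrite prob_union_disjoint; auto.
    + pose proof (prob_ge0 _ (sigma_diff F hF A B hA hB)). lra.
    + now apply sigma_diff.
    + intros w h1 [_ h2]; auto.
  - intro w; split; [intro h; destruct (classic (A w)); auto | intros [h|[h _]]; auto].
Qed.

Lemma prob_finite_union_const (A : nat -> Om -> Prop) (p : R) (m : nat) :
  (forall k, F (A k)) ->
  (forall k l w, (k < l < m)%nat -> A k w -> A l w -> False) ->
  (forall k, (k < m)%nat -> P (A k) = p) ->
  P (fun w => exists k, (k < m)%nat /\ A k w) = INR m * p.
Proof.
  intros hA hdisj hp. induction m as [|m IH].
  - rewrite Rmult_0_l, <- prob_empty. f_equal.
    apply pred_ext; intro w; split; [intros [k [hk _]]; lia | tauto].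
  - rewrite (pred_ext _ (fun w => (exists k, (k < m)%nat /\ A k w) \/ A m w)).
    + rewrite prob_union_disjoint, IH, hp, S_INR; try ring; try lia.
      * intros k l w hkl; apply hdisj; lia.
      * intros k hk; apply hp; lia.
      * now apply sigma_bounded_union.
      * apply hA.
      * intros w [k [hk h1]] h2. apply (hdisj k m w); auto; lia.
    + intro w; split.
      * intros [k [hk h]].
        destruct (Nat.eq_dec k m) as [->|ne]; [right | left; exists k; split]; auto; lia.
      * intros [[k [hk h]]|h]; [exists k | exists m]; split; auto; lia.
Qed.

End Probability.

Lemma nat_bracket z : 0 < z -> exists k : nat, INR k < z <= INR k + 1.
Proof.
  intro hz. destruct (archimed (- z)) as [h1 h2].
  assert (hv : (0 <= - up (- z))%Z).
  { apply Z.lt_succ_r, lt_IZR. rewrite succ_IZR, opp_IZR. lra. }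
  exists (Z.to_nat (- up (- z))).
  rewrite INR_IZR_INZ, Z2Nat.id, opp_IZR by exact hv. lra.
Qed.

Lemma eq0_of_le_inv_INR a : 0 <= a -> (forall n : nat, (2 <= n)%nat -> a <= / INR n) -> a = 0.
Proof.
  intros ha h. destruct (Req_dec a 0) as [e|ne]; [exact e|exfalso].
  destruct (INR_unbounded (/ a)) as [N hN].
  specialize (h (N + 2)%nat ltac:(lia)).
  rewrite plus_INR in h. simpl INR in h. pose proof (pos_INR N).
  apply (Rmult_le_compat_r (INR N + (1 + 1))) in h; [|lra].
  apply (Rmult_lt_compat_l a) in hN; [|lra].
  rewrite Rinv_l in h by lra. rewrite Rinv_r in hN by lra. nra.
Qed.

Lemma le_2_INR n : (2 <= n)%nat -> 2 <= INR n.
Proof. intro hn. change 2 with (INR 2). now apply le_INR. Qed.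

Lemma grid_step_bounds n : (2 <= n)%nat -> 0 < / INR n < 1.
Proof.
  intro hn. pose proof (le_2_INR n hn). split; [apply Rinv_0_lt_compat; lra|].
  rewrite <- Rinv_1. apply Rinv_1_lt_contravar; lra.
Qed.

Lemma grid_point_le n k l : (1 <= n)%nat -> (k <= l)%nat -> INR k / INR n <= INR l / INR n.
Proof.
  intros hn hkl. apply Rmult_le_compat_r; [|now apply le_INR].
  left. apply Rinv_0_lt_compat, lt_0_INR. lia.
Qed.

Lemma grid_point_nonneg n k : (1 <= n)%nat -> 0 <= INR k / INR n.
Proof.
  intro hn. pose proof (grid_point_le n 0 k hn (Nat.le_0_l k)) as h.
  now rewrite Rdiv_0_l in h.
Qed.

Lemma grid_point_le1 n k : (1 <= n)%nat -> (k <= n)%nat -> INR k / INR n <= 1.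
Proof.
  intros hn hk. rewrite <- (Rdiv_diag (INR n)); [now apply grid_point_le|].
  apply not_0_INR. lia.
Qed.

Lemma grid_point_succ n k : (1 <= n)%nat -> INR (S k) / INR n = INR k / INR n + / INR n.
Proof.
  intro hn. assert (0 < INR n) by (apply lt_0_INR; lia).
  rewrite S_INR. field. lra.
Qed.

Lemma eq_id_of_grid (G : R -> R) :
  (forall x y, 0 <= x -> x <= y -> y <= 1 -> G x <= G y) ->
  (forall n m, (2 <= n)%nat -> (m <= n)%nat -> G (INR m / INR n) = INR m / INR n) ->
  forall x, 0 <= x <= 1 -> G x = x.
Proof.
  intros hmono hgrid x hx.
  destruct (Req_dec x 0) as [ -> | hx0].
  { pose proof (hgrid 2%nat 0%nat (le_n 2) (Nat.le_0_l 2)) as h.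
    now rewrite Rdiv_0_l in h. }
  assert (hclose : Rabs (G x - x) = 0).
  { apply eq0_of_le_inv_INR; [apply Rabs_pos|]. intros n hn.
    pose proof (le_2_INR n hn) as hN.
    destruct (nat_bracket (x * INR n)) as [k hk]; [nra|].
    assert (hkn : (k < n)%nat) by (apply INR_lt; nra).
    assert (hlo : INR k / INR n < x).
    { apply (Rmult_lt_reg_r (INR n)); [lra|]. unfold Rdiv. rewrite Rmult_assoc, Rinv_l; lra. }
    assert (hhi : x <= INR (S k) / INR n).
    { apply (Rmult_le_reg_r (INR n)); [lra|]. unfold Rdiv. rewrite Rmult_assoc, Rinv_l, S_INR; lra. }
    pose proof (hmono _ _ (grid_point_nonneg n k ltac:(lia)) (Rlt_le _ _ hlo) (proj2 hx)) as hGlo.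
    pose proof (hmono _ _ (proj1 hx) hhi (grid_point_le1 n (S k) ltac:(lia) hkn)) as hGhi.
    rewrite hgrid in hGlo, hGhi by lia. rewrite grid_point_succ in hGhi, hhi by lia.
    apply Rabs_le. lra. }
  destruct (Rcase_abs (G x - x));
    [rewrite Rabs_left in hclose | rewrite Rabs_right in hclose]; lra.
Qed.

(* An arc of the circle R/Z of length d starting at c, traced on [0,1]; since
   0 and 1 are the same point, an arc ending at 1 also contains 0.  The piece
   (-1,0] stands for {0} and keeps the set a finite union of Borel generators. *)
Definition circle_arc (c d : R) (y : R) : Prop :=
  c < y <= c + d \/ (c + d = 1 /\ -1 < y <= 0).

Lemma borel_Ioc a b : borel (fun y => a < y <= b).
Proof. intros S hS hG. apply hG. now exists a, b. Qed.

Lemma borel_circle_arc c d : borel (circle_arc c d).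
Proof.
  intros S hS hG. destruct (Req_dec (c + d) 1) as [e|ne].
  - apply (sigma_ext S (fun y => c < y <= c + d \/ -1 < y <= 0)).
    + apply sigma_union; [exact hS | apply borel_Ioc | apply borel_Ioc]; assumption.
    + unfold circle_arc; tauto.
  - apply (sigma_ext S (fun y => c < y <= c + d)).
    + now apply borel_Ioc.
    + unfold circle_arc; tauto.
Qed.

Lemma circle_arc_rotate c d y z j : 0 <= c -> 0 < d < 1 -> c + d <= 1 ->
  0 <= y <= 1 -> 0 <= z <= 1 -> z = y - c + IZR j ->
  (circle_arc c d y <-> 0 < z <= d).
Proof.
  intros hc hd hcd hy hz hzj.
  assert (hj : (j = -1 \/ j = 0 \/ j = 1)%Z).
  { assert (-2 < j)%Z by (apply lt_IZR; lra). assert (j < 2)%Z by (apply lt_IZR; lra). lia. }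
  unfold circle_arc. destruct hj as [ -> | [ -> | -> ]]; simpl in hzj; split; intro; lra.
Qed.

Definition grid_arc (n k : nat) : R -> Prop := circle_arc (INR k / INR n) (/ INR n).

Lemma grid_arc_wraps n k : (1 <= n)%nat -> (INR k / INR n + / INR n = 1 <-> S k = n).
Proof.
  intro hn. assert (hN : 0 < INR n) by (apply lt_0_INR; lia).
  rewrite <- grid_point_succ by exact hn.
  split; [intro h | intros <-; apply Rdiv_diag; lra].
  apply INR_eq. assert (e : INR (S k) = INR (S k) / INR n * INR n) by (field; lra).
  rewrite h in e. lra.
Qed.

Lemma grid_arc_in_Ioc n m k y : (k < m)%nat -> (m < n)%nat ->
  grid_arc n k y -> 0 < y <= INR m / INR n.
Proof.
  intros hkm hmn. unfold grid_arc, circle_arc.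
  assert (hnw : INR k / INR n + / INR n <> 1) by (rewrite grid_arc_wraps; lia).
  pose proof (grid_point_nonneg n k ltac:(lia)).
  pose proof (grid_point_le n (S k) m ltac:(lia) hkm) as hkm'.
  rewrite grid_point_succ in hkm' by lia. lra.
Qed.

Lemma grid_arc_disjoint n k l y : (k < l)%nat -> (l < n)%nat -> 0 <= y <= 1 ->
  grid_arc n k y -> grid_arc n l y -> False.
Proof.
  intros hkl hln hy hk. unfold grid_arc, circle_arc.
  pose proof (grid_arc_in_Ioc n l k y hkl hln hk). lra.
Qed.

Lemma grid_arc_cover_Ioc n m y : (1 <= n)%nat -> 0 < y <= INR m / INR n ->
  exists k, (k < m)%nat /\ INR k / INR n < y <= INR k / INR n + / INR n.
Proof.
  intros hn hy. assert (hN : 0 < INR n) by (apply lt_0_INR; lia).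
  destruct (nat_bracket (y * INR n)) as [k hk]; [nra|].
  assert (hym : y * INR n <= INR m).
  { destruct hy as [_ hy]. apply (Rmult_le_compat_r (INR n)) in hy; [|lra].
    unfold Rdiv in hy. now rewrite Rmult_assoc, Rinv_l, Rmult_1_r in hy by lra. }
  exists k. split; [apply INR_lt; lra|].
  rewrite <- grid_point_succ, S_INR by exact hn.
  split; [apply (Rmult_lt_reg_r (INR n)) | apply (Rmult_le_reg_r (INR n))];
    try lra; unfold Rdiv; rewrite Rmult_assoc, Rinv_l; lra.
Qed.

Lemma grid_arc_cover_unit n y : (2 <= n)%nat -> 0 <= y <= 1 ->
  exists k, (k < n)%nat /\ grid_arc n k y.
Proof.
  intros hn hy. pose proof (le_2_INR n hn).
  destruct (Req_dec y 0) as [ -> | hy0].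
  - exists (n - 1)%nat. split; [lia|]. right. split; [apply grid_arc_wraps; lia | lra].
  - destruct (grid_arc_cover_Ioc n n y) as [k [hk hy']]; [lia | rewrite Rdiv_diag; lra|].
    exists k. split; [exact hk | now left].
Qed.

Section InvariantLocation.
Variables (H : (R -> R) -> Prop) (L : (R -> R) -> R -> R -> option R).
Hypothesis hL : invariant_intrinsic_location H L.

Lemma location_in_unit g y : H g -> L g 0 1 = Some y -> 0 <= y <= 1.
Proof. destruct hL as [[_ [hii _]] _]. intros hg. now apply hii; [|apply Rlt_0_1]. Qed.

Lemma location_unit g : H g -> exists y, L g 0 1 = Some y /\ 0 <= y <= 1.
Proof.
  intro hg. destruct hL as [_ [hfin _]].
  destruct (L g 0 1) as [y|] eqn:E; [|now destruct (hfin g 0 1 hg Rlt_0_1)].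
  exists y. split; [reflexivity | now apply (location_in_unit g)].
Qed.

Lemma location_shift_mod1 g c : H g -> exists y z j,
  L g 0 1 = Some y /\ L (Defs.shift c g) 0 1 = Some z /\ z = y - c + IZR j.
Proof.
  intro hg. destruct hL as [[_ [_ [hshift _]]] [_ hinv]].
  destruct (hinv g c hg) as [y [ya [k [hy [hya hk]]]]].
  pose proof (hshift g c (c + 1) c hg ltac:(lra)) as hc.
  replace (c - c) with 0 in hc by ring. replace (c + 1 - c) with 1 in hc by ring.
  rewrite hya in hc.
  destruct (L (Defs.shift c g) 0 1) as [z|]; simpl in hc; [|discriminate].
  injection hc as hc. exists y, z, (- k)%Z. rewrite opp_IZR. repeat split; auto. lra.
Qed.

Lemma location_event_cylindrical B : borel B -> exists A, cylindrical A /\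
  forall g, H g -> ((exists y, L g 0 1 = Some y /\ B y) <-> A g).
Proof. intro hB. destruct hL as [[hmeas _] _]. now apply (proj1 (hmeas 0 1 Rlt_0_1)). Qed.

End InvariantLocation.

Section LocationOfStationaryProcess.
Variables (Om : Type) (F : (Om -> Prop) -> Prop) (P : (Om -> Prop) -> R)
  (H : (R -> R) -> Prop) (L : (R -> R) -> R -> R -> option R) (X : Om -> R -> R).
Hypotheses (hF : sigma_algebra F) (hP : probability F P) (hH : periodic_shift_space H)
  (hL : invariant_intrinsic_location H L) (hX : periodic_stationary_process H F P X).

Definition location_in (B : R -> Prop) (w : Om) : Prop :=
  exists y, L (X w) 0 1 = Some y /\ B y.

Let path_in_H w : H (X w).
Proof. apply hX. Qed.

Lemma location_in_ext (B1 B2 : R -> Prop) :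
  (forall y, 0 <= y <= 1 -> (B1 y <-> B2 y)) -> location_in B1 = location_in B2.
Proof.
  intro h. apply pred_ext. intro w. unfold location_in.
  destruct (location_unit H L hL (X w) (path_in_H w)) as [y [-> hy]].
  split; intros [y' [e hb]]; injection e as <-; exists y; split; auto; now apply h.
Qed.

Lemma location_in_total w : location_in (fun y => 0 <= y <= 1) w.
Proof. apply (location_unit H L hL (X w) (path_in_H w)). Qed.

Lemma location_in_measurable B : borel B -> F (location_in B).
Proof.
  intro hB. destruct (location_event_cylindrical H L hL B hB) as [A [hA hAB]].
  apply (sigma_ext F (fun w => A (X w))); [now apply hX|].
  intro w. symmetry. exact (hAB (X w) (path_in_H w)).
Qed.

Lemma shifted_location_law c B : borel B ->
  P (fun w => exists z, L (Defs.shift c (X w)) 0 1 = Some z /\ B z) = P (location_in B).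
Proof.
  intro hB. destruct (location_event_cylindrical H L hL B hB) as [A [hA hAB]].
  destruct hH as [_ hshiftH]. destruct hX as [_ [_ [_ [_ hstat]]]].
  rewrite (pred_ext _ (fun w => A (Defs.shift c (X w)))), (pred_ext (location_in B) (fun w => A (X w))).
  - now apply hstat.
  - intro w. exact (hAB (X w) (path_in_H w)).
  - intro w. exact (hAB _ (hshiftH _ c (path_in_H w))).
Qed.

Lemma location_rotation_invariant c d : 0 <= c -> 0 < d < 1 -> c + d <= 1 ->
  P (location_in (circle_arc c d)) = P (location_in (fun y => 0 < y <= d)).
Proof.
  intros hc hd hcd. rewrite <- (shifted_location_law c (fun y => 0 < y <= d)); [|apply borel_Ioc].
  f_equal. apply pred_ext. intro w. unfold location_in.
  destruct (location_shift_mod1 H L hL (X w) c (path_in_H w)) as [y [z [j [hy [hz hzj]]]]].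
  rewrite hy, hz.
  pose proof (location_in_unit H L hL _ _ (path_in_H w) hy) as hy1.
  pose proof (location_in_unit H L hL _ _ (proj2 hH _ c (path_in_H w)) hz) as hz1.
  pose proof (circle_arc_rotate c d y z j hc hd hcd hy1 hz1 hzj) as hrot.
  split; intros [y' [e hb]]; injection e as <-; eexists; split; try reflexivity; now apply hrot.
Qed.

Let grid_union n m := fun w => exists k, (k < m)%nat /\ location_in (grid_arc n k) w.

Let prob_grid_union n m : (2 <= n)%nat -> (m <= n)%nat ->
  P (grid_union n m) = INR m * P (location_in (fun y => 0 < y <= / INR n)).
Proof.
  intros hn hm. apply (prob_finite_union_const F P hF hP).
  - intro k. apply location_in_measurable, borel_circle_arc.
  - intros k l w hkl [y [e hk]] [y' [e' hl]]. rewrite e in e'. injection e' as <-.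
    apply (grid_arc_disjoint n k l y); try lia; auto.
    exact (location_in_unit H L hL _ _ (path_in_H w) e).
  - intros k hk. apply location_rotation_invariant.
    + apply grid_point_nonneg. lia.
    + now apply grid_step_bounds.
    + rewrite <- grid_point_succ by lia. apply grid_point_le1; lia.
Qed.

Lemma prob_location_Ioc_step n : (2 <= n)%nat ->
  P (location_in (fun y => 0 < y <= / INR n)) = / INR n.
Proof.
  intro hn. pose proof (le_2_INR n hn).
  assert (hall : P (grid_union n n) = 1).
  { destruct hP as [h1 _]. rewrite <- h1. f_equal. apply pred_ext. intro w. split; [tauto|intros _].
    destruct (location_in_total w) as [y [e hy]].
    destruct (grid_arc_cover_unit n y hn hy) as [k [hk ha]].
    exists k. split; [exact hk | now exists y]. }
  rewrite prob_grid_union in hall by lia.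
  apply (Rmult_eq_reg_l (INR n)); [rewrite hall; field|]; lra.
Qed.

Lemma prob_location_Ioc_grid n m : (2 <= n)%nat -> (m < n)%nat ->
  P (location_in (fun y => 0 < y <= INR m / INR n)) = INR m / INR n.
Proof.
  intros hn hm. pose proof (le_2_INR n hn).
  transitivity (P (grid_union n m)).
  - f_equal. apply pred_ext. intro w. split.
    + intros [y [e hy]]. destruct (grid_arc_cover_Ioc n m y) as [k [hk ha]]; [lia | exact hy|].
      exists k. split; [exact hk | exists y; split; [exact e | now left]].
    + intros [k [hk [y [e ha]]]]. exists y. split; [exact e|]. now apply (grid_arc_in_Ioc n m k).
  - rewrite prob_grid_union, prob_location_Ioc_step by lia. field. lra.
Qed.

Lemma prob_location_zero : P (location_in (fun y => -1 < y <= 0)) = 0.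
Proof.
  apply eq0_of_le_inv_INR.
  - apply (prob_ge0 F P hP), location_in_measurable, borel_Ioc.
  - intros n hn. rewrite <- (prob_location_Ioc_step n hn).
    assert (hwrap : INR (n - 1) / INR n + / INR n = 1) by (apply grid_arc_wraps; lia).
    rewrite <- (location_rotation_invariant (INR (n - 1) / INR n) (/ INR n)).
    + apply (prob_le F P hF hP);
        [apply location_in_measurable, borel_Ioc | apply location_in_measurable, borel_circle_arc|].
      intros w [y [e hy]]. exists y. split; [exact e | now right].
    + apply grid_point_nonneg. lia.
    + now apply grid_step_bounds.
    + now right.
Qed.

Definition location_cdf (x : R) : R := P (location_in (fun y => -1 < y <= x)).

Lemma location_cdf_monotone x y : 0 <= x -> x <= y -> y <= 1 ->
  location_cdf x <= location_cdf y.
Proof.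
  intros hx hxy hy. unfold location_cdf.
  apply (prob_le F P hF hP); [apply location_in_measurable, borel_Ioc.. |].
  intros w [z [e hz]]. exists z. split; [exact e | lra].
Qed.

Lemma location_cdf_grid n m : (2 <= n)%nat -> (m <= n)%nat ->
  location_cdf (INR m / INR n) = INR m / INR n.
Proof.
  intros hn hm. pose proof (le_2_INR n hn).
  unfold location_cdf. destruct (Nat.eq_dec m n) as [->|ne].
  - rewrite Rdiv_diag by lra. destruct hP as [h1 _]. rewrite <- h1. f_equal.
    apply pred_ext. intro w. split; [tauto|intros _].
    destruct (location_in_total w) as [y [e hy]]. exists y. split; [exact e | lra].
  - assert (hsplit : location_in (fun y => -1 < y <= INR m / INR n) =
      (fun w => location_in (fun y => -1 < y <= 0) w \/ location_in (fun y => 0 < y <= INR m / INR n) w)).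
    { apply pred_ext. intro w. unfold location_in. split.
      - intros [y [e hy]]. destruct (Rle_dec y 0); [left | right]; exists y; split; auto; lra.
      - pose proof (grid_point_nonneg n m ltac:(lia)).
        intros [[y [e hy]]|[y [e hy]]]; exists y; split; auto; lra. }
    rewrite hsplit, (prob_union_disjoint F P hF hP).
    + rewrite prob_location_zero, prob_location_Ioc_grid by lia. ring.
    + apply location_in_measurable, borel_Ioc.
    + apply location_in_measurable, borel_Ioc.
    + intros w [y [e hy]] [y' [e' hy']]. rewrite e in e'. injection e' as <-. lra.
Qed.

End LocationOfStationaryProcess.

Theorem mainTheorem5 (Om : Type) (F : (Om -> Prop) -> Prop) (P : (Om -> Prop) -> R)
  (H : (R -> R) -> Prop) (L : (R -> R) -> R -> R -> option R) (X : Om -> R -> R) :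
  sigma_algebra F -> probability F P ->
  periodic_shift_space H ->
  invariant_intrinsic_location H L ->
  periodic_stationary_process H F P X ->
  forall x, 0 <= x <= 1 ->
    P (fun w => exists y, L (X w) 0 1 = Some y /\ y <= x) = x.
Proof.
  intros hF hP hH hL hX x hx.
  change (P (location_in Om L X (fun y => y <= x)) = x).
  rewrite (location_in_ext Om F P H L X hL hX (fun y => y <= x) (fun y => -1 < y <= x))
    by (intros; lra).
  apply (eq_id_of_grid (location_cdf Om P L X)); [| | exact hx].
  - eapply location_cdf_monotone; eassumption.
  - eapply location_cdf_grid; eassumption.
Qed.
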